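(* Let $\mathcal{A}$ be a Banach algebra such that $\mathrm{rad}(\mathcal{A})=\mathrm{rann}(\mathcal{A})$ and $\mathcal{A}/\mathrm{rad}(\mathcal{A})$ is commutative. Then the center $Z(\mathcal{A})$ is a closed ideal of $\mathcal{A}$.
   Context: $\mathrm{rad}(\mathcal{A})$ is the Jacobson radical and $\mathrm{rann}(\mathcal{A})=\{c\in\mathcal{A}: ac=0\ \forall a\in\mathcal{A}\}$. $Z(\mathcal{A})=\{z: za=az\ \forall a\in\mathcal{A}\}$. *)

From HB Require Import structures.
From mathcomp Require Import all_boot all_order all_algebra.
From mathcomp Require Import complex.
From mathcomp Require Import all_classical all_reals all_analysis.
Set Implicit Arguments. Unset Strict Implicit. Unset Printing Implicit Defensive.
Import Order.TTheory GRing.Theory Num.Theory.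
Import numFieldNormedType.Exports.
Local Open Scope ring_scope.
Local Open Scope classical_set_scope.

Definition is_banach_algebra (K : numFieldType) (A : completeNormedModType K)
    (mul : A -> A -> A) : Prop :=
  [/\ associative mul,
      (forall a b c, mul a (b + c) = mul a b + mul a c) /\
      (forall a b c, mul (a + b) c = mul a c + mul b c),
      (forall (k : K) a b, mul (k *: a) b = k *: mul a b),
      (forall (k : K) a b, mul a (k *: b) = k *: mul a b)
    & (forall a b, Num.norm (mul a b) <= Num.norm a * Num.norm b)].

(* a is left quasi-invertible: exists b with b o a = b + a - ba = 0. *)
Definition left_quasi_regular (K : numFieldType) (A : completeNormedModType K)
    (mul : A -> A -> A) (a : A) : Prop :=
  exists b : A, b + a - mul b a = 0.

Definition jacobson_rad (K : numFieldType) (A : completeNormedModType K)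
    (mul : A -> A -> A) : set A :=
  [set a | forall b, left_quasi_regular mul (mul b a)].

Definition rann (K : numFieldType) (A : completeNormedModType K)
    (mul : A -> A -> A) : set A :=
  [set c | forall a, mul a c = 0].

Definition alg_center (K : numFieldType) (A : completeNormedModType K)
    (mul : A -> A -> A) : set A :=
  [set z | forall a, mul z a = mul a z].

(* A / I is commutative (I an ideal): every commutator lies in I. *)
Definition quotient_commutative (K : numFieldType) (A : completeNormedModType K)
    (mul : A -> A -> A) (I : set A) : Prop :=
  forall a b, I (mul a b - mul b a).

Definition is_ideal (K : numFieldType) (A : completeNormedModType K)
    (mul : A -> A -> A) (I : set A) : Prop :=
  [/\ I 0,
      (forall x y, I x -> I y -> I (x + y)),
      (forall (k : K) x, I x -> I (k *: x)),
      (forall a x, I x -> I (mul a x))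
    & (forall a x, I x -> I (mul x a))].

Definition is_closed_ideal (K : numFieldType) (A : completeNormedModType K)
    (mul : A -> A -> A) (I : set A) : Prop :=
  closed I /\ is_ideal mul I.

From HB Require Import structures.
From mathcomp Require Import all_boot all_order all_algebra.
From mathcomp Require Import complex.
From mathcomp Require Import all_classical all_reals all_analysis.
Import Order.TTheory GRing.Theory Num.Theory.
Import numFieldNormedType.Exports.
Local Open Scope ring_scope.
Local Open Scope classical_set_scope.

(* Z(A) is the intersection of the kernels of the continuous maps
   z |-> za - az, hence closed.  Since rad(A) = rann(A) and A/rad(A) is
   commutative, every commutator ab - ba is annihilated on the left, so for
   central z we get z(ab) = z(ba), whence (za)b = z(ba) = (zb)a = b(za): the
   centre absorbs multiplication. *)

Lemma lipschitz_continuous (K : numFieldType) (V W : normedModType K)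
    (k : K) (f : V -> W) : 0 <= k ->
  (forall x y, `|f x - f y| <= k * `|x - y|) -> continuous f.
Proof.
move=> k_ge0 f_lip x; apply/cvgrPdist_lt => e e_gt0.
have k1_gt0 : 0 < k + 1 by rewrite ltr_wpDl.
have : \forall y \near x, `|x - y| < e / (k + 1).
  by apply: cvgr_dist_lt; [exact: cvg_id | rewrite divr_gt0].
apply: filterS => y xy_lt; apply: le_lt_trans (f_lip x y) _.
apply: (le_lt_trans (y := (k + 1) * `|x - y|)).
  by rewrite ler_wpM2r // lerDl.
by rewrite mulrC -ltr_pdivlMr.
Qed.

Section NormedAlgebra.
Variables (K : numFieldType) (A : completeNormedModType K) (mul : A -> A -> A).
Hypothesis mulA : associative mul.
Hypothesis mulDr : forall a b c, mul a (b + c) = mul a b + mul a c.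
Hypothesis mulDl : forall a b c, mul (a + b) c = mul a c + mul b c.
Hypothesis mulZl : forall (k : K) a b, mul (k *: a) b = k *: mul a b.
Hypothesis mulZr : forall (k : K) a b, mul a (k *: b) = k *: mul a b.
Hypothesis mul_norm : forall a b, `|mul a b| <= `|a| * `|b|.
Hypothesis commutator_rann : forall a b, rann mul (mul a b - mul b a).

Lemma mulBl x y a : mul (x - y) a = mul x a - mul y a.
Proof. by apply/eqP; rewrite eq_sym subr_eq -mulDl subrK. Qed.

Lemma mulBr a x y : mul a (x - y) = mul a x - mul a y.
Proof. by apply/eqP; rewrite eq_sym subr_eq -mulDr subrK. Qed.

Lemma mul0x a : mul 0 a = 0.
Proof. by have := mulBl 0 0 a; rewrite !subrr. Qed.

Lemma mulx0 a : mul a 0 = 0.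
Proof. by have := mulBr a 0 0; rewrite !subrr. Qed.

Lemma continuous_mull a : continuous (mul^~ a).
Proof.
by apply: (@lipschitz_continuous _ _ _ `|a|) => // x y; rewrite -mulBl mulrC.
Qed.

Lemma continuous_mulr a : continuous (mul a).
Proof. by apply: (@lipschitz_continuous _ _ _ `|a|) => // x y; rewrite -mulBr. Qed.

Lemma closed_alg_center : closed (alg_center mul).
Proof.
have -> : alg_center mul =
    \bigcap_(a in setT) ((fun z => mul z a - mul a z) @^-1` [set 0]).
  apply/seteqP; split=> z /= zC.
    by move=> a _; rewrite /preimage /= zC subrr.
  by move=> a; apply/eqP; rewrite -subr_eq0; apply/eqP/zC.
apply: closed_bigI => a _; apply: preimage_closed.
  move=> z _; apply: continuousB; first exact: continuous_mull.
  exact: continuous_mulr.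
exact/accessible_closed_set1/hausdorff_accessible/norm_hausdorff.
Qed.

Lemma alg_center_mulr z a : alg_center mul z -> alg_center mul (mul z a).
Proof.
move=> zC b /=.
have /eqP : mul z (mul a b - mul b a) = 0 by apply: commutator_rann.
rewrite mulBr subr_eq0 => /eqP zab.
by rewrite -mulA zab mulA zC -mulA.
Qed.

Lemma alg_center_ideal : is_ideal mul (alg_center mul).
Proof.
split=> [a | x y xC yC a | k x xC a | a x xC | a x xC] /=.
- by rewrite mul0x mulx0.
- by rewrite mulDl mulDr xC yC.
- by rewrite mulZl mulZr xC.
- by rewrite -xC; apply: alg_center_mulr.
- exact: alg_center_mulr.
Qed.

End NormedAlgebra.

Theorem lemma5p2 (R : realType) (A : completeNormedModType R[i])
    (mul : A -> A -> A) :
  is_banach_algebra mul ->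
  jacobson_rad mul = rann mul ->
  quotient_commutative mul (jacobson_rad mul) ->
  is_closed_ideal mul (alg_center mul).
Proof.
move=> [mulA [mulDr mulDl] mulZl mulZr mul_norm] radE comm_rad.
have commutator_rann a b : rann mul (mul a b - mul b a).
  by rewrite -radE; apply: comm_rad.
split; first exact: closed_alg_center.
exact: alg_center_ideal.
Qed.
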